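(* The set of regular time warps contains $\mathrm{id}$ and is closed under $\wedge$, $\vee$, $\circ$ and ${}^\star$; that is, it forms a subalgebra $\mathbf{R}$ of the time warp algebra $\mathbf{W}$.
   Context: Let $\omega^+=\omega\cup\{\omega\}$. A time warp is a map $f\colon\omega^+\to\omega^+$ preserving arbitrary joins (equivalently, order-preserving with $f(0)=0$ and $f(\omega)=\bigvee_{n\in\omega}f(n)$). $W$ is the set of time warps, ordered pointwise; $p(m)=\bigvee\{n\in\omega\mid n<m\}$; $f\backslash g$ is the largest time warp $h$ with $f\circ h\le g$. $\mathbf{W}=\langle W,\wedge,\vee,\circ,{}^\star,\mathrm{id}\rangle$ with pointwise meet/join, composition, $f^\star:=f\backslash p$, identity. A time warp $f$ is eventually constant if there is $m\in\omega$ with $f(n)=f(m)$ for all $n\in\omega$, $n\ge m$; eventually linear if there are $m\in\omega$, $k\in\mathbb{Z}$ with $f(n)=n+k$ for all $n\in\omega$, $n\ge m$; regular if it is eventually constant or eventually linear. *)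

From Stdlib Require Import Arith ZArith.

(* omega^+ = omega ∪ {omega} *)
Inductive wp : Type := Fin (n : nat) | Om.

Definition wle (x y : wp) : Prop :=
  match x, y with
  | Fin m, Fin n => m <= n
  | _, Om => True
  | Om, Fin _ => False
  end.

Definition is_lub (S : wp -> Prop) (x : wp) : Prop :=
  (forall y, S y -> wle y x) /\ (forall z, (forall y, S y -> wle y z) -> wle x z).

Definition img (f : wp -> wp) (S : wp -> Prop) : wp -> Prop :=
  fun y => exists x, S x /\ y = f x.

Definition time_warp (f : wp -> wp) : Prop :=
  forall (S : wp -> Prop) (x : wp), is_lub S x -> is_lub (img f S) (f x).

Definition fle (f g : wp -> wp) : Prop := forall x, wle (f x) (g x).

Definition wmin (x y : wp) : wp :=
  match x, y with
  | Fin m, Fin n => Fin (Nat.min m n)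
  | Om, y => y
  | x, Om => x
  end.
Definition wmax (x y : wp) : wp :=
  match x, y with
  | Fin m, Fin n => Fin (Nat.max m n)
  | _, _ => Om
  end.
Definition tw_meet (f g : wp -> wp) : wp -> wp := fun x => wmin (f x) (g x).
Definition tw_join (f g : wp -> wp) : wp -> wp := fun x => wmax (f x) (g x).
Definition tw_comp (f g : wp -> wp) : wp -> wp := fun x => f (g x).
Definition tw_id : wp -> wp := fun x => x.

(* p(m) = \/ {n in omega | n < m}:  p 0 = 0, p (k+1) = k, p omega = omega *)
Definition pw (x : wp) : wp :=
  match x with
  | Fin 0 => Fin 0
  | Fin (S k) => Fin k
  | Om => Om
  end.

Definition is_residual (f g h : wp -> wp) : Prop :=
  time_warp h /\ fle (tw_comp f h) g /\
  (forall h', time_warp h' -> fle (tw_comp f h') g -> fle h' h).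

Definition is_star (f h : wp -> wp) : Prop := is_residual f pw h.

Definition eventually_constant (f : wp -> wp) : Prop :=
  exists m : nat, forall n : nat, m <= n -> f (Fin n) = f (Fin m).

Definition eventually_linear (f : wp -> wp) : Prop :=
  exists (m : nat) (k : Z), forall n : nat, m <= n ->
    exists j : nat, f (Fin n) = Fin j /\ Z.of_nat j = (Z.of_nat n + k)%Z.

Definition regular (f : wp -> wp) : Prop :=
  eventually_constant f \/ eventually_linear f.

Definition regular_tw (f : wp -> wp) : Prop := time_warp f /\ regular f.

(** The regular time warps are those whose values on finite arguments eventually
    follow [n ↦ c] or [n ↦ n + k]; such behaviour is preserved by pointwise
    [min]/[max] (a line eventually overtakes every constant) and by composition.
    For the star, [f^⋆ (j + 1)] is the largest [y] with [f y ≤ j]: if [f] is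
    eventually [n + k] this is [j - k], and if [f] is eventually constant it
    stabilises at [ω] or at the last point where [f] is finite. *)

From Stdlib Require Import Arith ZArith Lia Classical IndefiniteDescription.

Lemma wle_refl x : wle x x.
Proof. destruct x; simpl; auto. Qed.

Lemma wle_trans x y z : wle x y -> wle y z -> wle x z.
Proof. destruct x, y, z; simpl; intros; auto; try lia; contradiction. Qed.

Lemma wle_antisym x y : wle x y -> wle y x -> x = y.
Proof. destruct x, y; simpl; intros; try (f_equal; lia); tauto. Qed.

Lemma wle_Om x : wle x Om.
Proof. destruct x; exact I. Qed.

Lemma wle_Fin0 x : wle (Fin 0) x.
Proof. destruct x; simpl; auto; lia. Qed.

Lemma wle_Fin_of_not k y : ~ wle (Fin (S k)) y -> wle y (Fin k).
Proof. destruct y; simpl; intros H; [lia | exfalso; exact (H I)]. Qed.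

Lemma wmin_le_iff a b z : wle (wmin a b) z <-> wle a z \/ wle b z.
Proof. destruct a, b, z; simpl; intuition lia. Qed.

Lemma wmax_le_iff a b z : wle (wmax a b) z <-> wle a z /\ wle b z.
Proof. destruct a, b, z; simpl; intuition lia. Qed.

Lemma wmin_mono a a' b b' : wle a a' -> wle b b' -> wle (wmin a b) (wmin a' b').
Proof. destruct a, a', b, b'; simpl; intuition lia. Qed.

Lemma wmax_mono a a' b b' : wle a a' -> wle b b' -> wle (wmax a b) (wmax a' b').
Proof. destruct a, a', b, b'; simpl; intuition lia. Qed.

Lemma wmin_comm a b : wmin a b = wmin b a.
Proof. destruct a, b; simpl; auto; f_equal; lia. Qed.

Lemma wmax_comm a b : wmax a b = wmax b a.
Proof. destruct a, b; simpl; auto; f_equal; lia. Qed.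

Lemma is_lub_unique S x y : is_lub S x -> is_lub S y -> x = y.
Proof. intros [ubx lx] [uby ly]; apply wle_antisym; auto. Qed.

Lemma is_lub_exists (S : wp -> Prop) : exists x, is_lub S x.
Proof.
  destruct (classic (exists b, forall y, S y -> wle y (Fin b))) as [[b Hb] | Hunb].
  - destruct (dec_inh_nat_subset_has_unique_least_element
                (fun n => forall y, S y -> wle y (Fin n)) (fun n => classic _)
                (ex_intro _ b Hb)) as [n [[Hn Hleast] _]].
    exists (Fin n); split; [exact Hn |].
    intros [m |] Hm; simpl; auto.
  - exists Om; split; [intros; apply wle_Om |].
    intros [m |] Hm; [exfalso; eauto | exact I].
Qed.

Definition wsup (S : wp -> Prop) : wp :=
  proj1_sig (constructive_indefinite_description _ (is_lub_exists S)).

Lemma wsup_lub S : is_lub S (wsup S).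
Proof. exact (proj2_sig (constructive_indefinite_description _ (is_lub_exists S))). Qed.

Lemma wsup_ub S y : S y -> wle y (wsup S).
Proof. apply (wsup_lub S). Qed.

Lemma wsup_least S z : (forall y, S y -> wle y z) -> wle (wsup S) z.
Proof. apply (wsup_lub S). Qed.

Lemma wsup_mono (S T : wp -> Prop) : (forall y, S y -> T y) -> wle (wsup S) (wsup T).
Proof. intros ST; apply wsup_least; intros y Sy; apply wsup_ub, ST, Sy. Qed.

Record warp (f : wp -> wp) : Prop := {
  warp_zero : f (Fin 0) = Fin 0;
  warp_mono : forall x y, wle x y -> wle (f x) (f y);
  warp_Om : forall z, (forall n, wle (f (Fin n)) z) -> wle (f Om) z }.

Lemma time_warp_warp f : time_warp f -> warp f.
Proof.
  intros Hf; split.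
  - apply (is_lub_unique (img f (fun _ => False))).
    + apply Hf; split; [intros _ [] | intros; apply wle_Fin0].
    + split; [intros y [x [[] _]] | intros; apply wle_Fin0].
  - intros x y Hxy.
    destruct (Hf (fun z => z = x \/ z = y) y) as [ub _].
    + split; [intros z [-> | ->]; auto using wle_refl | intros z Hz; auto].
    + apply ub; exists x; auto.
  - intros z Hz.
    destruct (Hf (fun y => exists n, y = Fin n) Om) as [_ least].
    + split; [intros; apply wle_Om |].
      intros [m |] Hm; [| exact I].
      specialize (Hm (Fin (S m)) (ex_intro _ _ eq_refl)); simpl in Hm; lia.
    + apply least; intros y [x [[n ->] ->]]; apply Hz.
Qed.

Lemma warp_time_warp f : warp f -> time_warp f.
Proof.
  intros [f0 fmono fOm] P x [ub least]; split.
  - intros y [x0 [Px0 ->]]; apply fmono, ub, Px0.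
  - intros z Hz.
    assert (below : forall n, wle (Fin n) x -> wle (f (Fin n)) z).
    { intros [| k] Hk; [rewrite f0; apply wle_Fin0 |].
      destruct (classic (exists y, P y /\ wle (Fin (S k)) y)) as [[y [Py Hy]] | Hnone].
      - apply wle_trans with (f y); [apply fmono, Hy | apply Hz; exists y; auto].
      - exfalso.
        assert (Hx : wle x (Fin k)).
        { apply least; intros y Py; apply wle_Fin_of_not; eauto. }
        pose proof (wle_trans _ _ _ Hk Hx) as C; simpl in C; lia. }
    destruct x as [n |]; [apply below, wle_refl |].
    apply fOm; intro n; apply below, wle_Om.
Qed.

Lemma time_warpP f : time_warp f <-> warp f.
Proof. split; [apply time_warp_warp | apply warp_time_warp]. Qed.

Lemma warp_id : warp tw_id.
Proof.
  split; unfold tw_id; auto.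
  intros [m |] Hz; [| exact I].
  specialize (Hz (S m)); simpl in Hz; lia.
Qed.

Lemma warp_meet f g : warp f -> warp g -> warp (tw_meet f g).
Proof.
  intros [f0 fmono fOm] [g0 gmono gOm]; unfold tw_meet; split.
  - rewrite f0, g0; reflexivity.
  - intros; apply wmin_mono; auto.
  - intros z Hz; apply wmin_le_iff.
    destruct (classic (forall n, wle (f (Fin n)) z)) as [Hf | Hf]; [left; auto | right].
    apply not_all_ex_not in Hf; destruct Hf as [n0 Hn0].
    apply gOm; intro n.
    destruct (proj1 (wmin_le_iff _ _ _) (Hz (Nat.max n n0))) as [H | H].
    + exfalso; apply Hn0.
      apply wle_trans with (f (Fin (Nat.max n n0))); [apply fmono; simpl; lia | exact H].
    + apply wle_trans with (g (Fin (Nat.max n n0))); [apply gmono; simpl; lia | exact H].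
Qed.

Lemma warp_join f g : warp f -> warp g -> warp (tw_join f g).
Proof.
  intros [f0 fmono fOm] [g0 gmono gOm]; unfold tw_join; split.
  - rewrite f0, g0; reflexivity.
  - intros; apply wmax_mono; auto.
  - intros z Hz; apply wmax_le_iff.
    split; [apply fOm | apply gOm]; intro n; apply (proj1 (wmax_le_iff _ _ _) (Hz n)).
Qed.

Lemma warp_Om_attained g m :
  warp g -> wle (Fin m) (g Om) -> exists n, wle (Fin m) (g (Fin n)).
Proof.
  intros Hg Hm; apply NNPP; intro Hnone.
  destruct m as [| k]; [apply Hnone; exists 0; apply wle_Fin0 |].
  assert (HOm : wle (g Om) (Fin k)).
  { apply (warp_Om g Hg); intro n; apply wle_Fin_of_not; eauto. }
  pose proof (wle_trans _ _ _ Hm HOm) as C; simpl in C; lia.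
Qed.

Lemma warp_comp f g : warp f -> warp g -> warp (tw_comp f g).
Proof.
  intros Hf Hg; unfold tw_comp; split.
  - rewrite (warp_zero g Hg); apply (warp_zero f Hf).
  - intros; apply (warp_mono f Hf), (warp_mono g Hg); assumption.
  - intros z Hz.
    assert (below : forall m, wle (Fin m) (g Om) -> wle (f (Fin m)) z).
    { intros m Hm; destruct (warp_Om_attained g m Hg Hm) as [n Hn].
      apply wle_trans with (f (g (Fin n))); [apply (warp_mono f Hf), Hn | apply Hz]. }
    destruct (g Om) as [m |].
    + apply below, wle_refl.
    + apply (warp_Om f Hf); intro m; apply below; exact I.
Qed.

Definition eventually (P : nat -> Prop) : Prop := exists m, forall n, m <= n -> P n.

Lemma eventually_and P Q :
  eventually P -> eventually Q -> eventually (fun n => P n /\ Q n).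
Proof. intros [m HP] [m' HQ]; exists (m + m'); split; [apply HP | apply HQ]; lia. Qed.

Lemma eventually_mono (P Q : nat -> Prop) :
  (forall n, P n -> Q n) -> eventually P -> eventually Q.
Proof. intros PQ [m HP]; exists m; auto. Qed.

Lemma eventually_succ P : eventually (fun n => P (S n)) -> eventually P.
Proof. intros [m HP]; exists (S m); intros [| n] Hn; [lia | apply HP; lia]. Qed.

Definition offset (k : Z) (n : nat) (x : wp) : Prop :=
  exists j, x = Fin j /\ Z.of_nat j = (Z.of_nat n + k)%Z.

Lemma eventually_offset k P :
  eventually P -> eventually (fun n => forall j, Z.of_nat j = (Z.of_nat n + k)%Z -> P j).
Proof. intros [m HP]; exists (m + Z.to_nat (- k)); intros n Hn j Hj; apply HP; lia. Qed.

Lemma regularE f :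
  regular f <-> (exists c, eventually (fun n => f (Fin n) = c)) \/
                (exists k, eventually (fun n => offset k n (f (Fin n)))).
Proof.
  unfold regular, eventually_constant, eventually_linear, eventually, offset; split.
  - intros [[m H] | [m [k H]]]; [left; exists (f (Fin m)) | right; exists k]; eauto.
  - intros [[c [m H]] | [k [m H]]]; [left | right; eauto].
    exists m; intros n Hn; rewrite !H; auto.
Qed.

Lemma regular_ext f g : (forall x, f x = g x) -> regular f -> regular g.
Proof.
  intros E; rewrite !regularE; intros [[c Hc] | [k Hk]]; [left; exists c | right; exists k];
    revert Hc || revert Hk; apply eventually_mono; intro n; rewrite E; auto.
Qed.

Lemma regular_id : regular tw_id.
Proof. apply regularE; right; exists 0%Z, 0; intros n _; exists n; split; [reflexivity | lia]. Qed.

Lemma regular_meet_join_const_offset f g c k :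
  eventually (fun n => f (Fin n) = c) -> eventually (fun n => offset k n (g (Fin n))) ->
  regular (tw_meet f g) /\ regular (tw_join f g).
Proof.
  intros Hf Hg; unfold tw_meet, tw_join; rewrite !regularE.
  assert (Hfg := eventually_and _ _ Hf Hg).
  destruct c as [a |].
  - assert (Ha : eventually (fun n => forall j, Z.of_nat j = (Z.of_nat n + k)%Z -> a <= j)).
    { apply (eventually_offset k (fun j => a <= j)); exists a; auto. }
    assert (Hfga := eventually_and _ _ Hfg Ha).
    split; [left; exists (Fin a) | right; exists k]; revert Hfga; apply eventually_mono;
      intros n [[-> [j [-> Zj]]] Haj]; specialize (Haj j Zj); simpl.
    + f_equal; lia.
    + exists j; split; [f_equal; lia | exact Zj].
  - split; [right; exists k | left; exists Om]; revert Hfg; apply eventually_mono;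
      intros n [-> Hgn]; [exact Hgn | reflexivity].
Qed.

Lemma regular_meet_join f g :
  regular f -> regular g -> regular (tw_meet f g) /\ regular (tw_join f g).
Proof.
  intros Rf Rg; apply regularE in Rf, Rg.
  destruct Rf as [[c Hf] | [k Hf]], Rg as [[d Hg] | [l Hg]].
  - assert (Hfg := eventually_and _ _ Hf Hg); unfold tw_meet, tw_join.
    split; apply regularE; left; [exists (wmin c d) | exists (wmax c d)];
      revert Hfg; apply eventually_mono; intros n [-> ->]; reflexivity.
  - exact (regular_meet_join_const_offset f g c l Hf Hg).
  - destruct (regular_meet_join_const_offset g f d k Hg Hf) as [Hm Hj].
    split; [revert Hm | revert Hj]; apply regular_ext; intro x;
      [apply wmin_comm | apply wmax_comm].
  - assert (Hfg := eventually_and _ _ Hf Hg); unfold tw_meet, tw_join.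
    split; apply regularE; right; [exists (Z.min k l) | exists (Z.max k l)];
      revert Hfg; apply eventually_mono; intros n [[i [-> Zi]] [j [-> Zj]]]; simpl;
      [exists (Nat.min i j) | exists (Nat.max i j)]; split; auto; lia.
Qed.

Lemma regular_comp f g : regular f -> regular g -> regular (tw_comp f g).
Proof.
  intros Rf Rg; apply regularE in Rf, Rg; apply regularE; unfold tw_comp.
  destruct Rg as [[c Hg] | [l Hg]].
  - left; exists (f c); revert Hg; apply eventually_mono; intros n ->; reflexivity.
  - destruct Rf as [[c Hf] | [k Hf]]; [left; exists c | right; exists (k + l)%Z];
      assert (H := eventually_and _ _ Hg (eventually_offset l _ Hf)); revert H;
      apply eventually_mono; intros n [[j [-> Zj]] Hfj]; specialize (Hfj j Zj).
    + exact Hfj.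
    + destruct Hfj as [i [-> Zi]]; exists i; split; [reflexivity | lia].
Qed.

(* At [ω] this is the supremum of [{y | f y < ω}] rather than of [{y | f y ≤ p ω}]
   (which is [ω]), as continuity at [ω] demands. *)
Definition star_of (f : wp -> wp) (x : wp) : wp :=
  wsup (fun y => exists j, wle (Fin (S j)) x /\ wle (f y) (Fin j)).

Definition star_adjunction (f h : wp -> wp) : Prop :=
  forall j y, wle (f y) (Fin j) <-> wle y (h (Fin (S j))).

Lemma warp_star_of f : warp (star_of f).
Proof.
  split.
  - apply wle_antisym; [| apply wle_Fin0].
    apply wsup_least; intros y [j [Hj _]]; simpl in Hj; lia.
  - intros x x' Hx; apply wsup_mono; intros y [j [Hj Hy]].
    exists j; split; [apply wle_trans with x |]; assumption.
  - intros z Hz; apply wsup_least; intros y [j [_ Hy]].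
    apply wle_trans with (star_of f (Fin (S j))); [| apply Hz].
    apply wsup_ub; exists j; split; [apply wle_refl | exact Hy].
Qed.

Lemma star_of_adjunction f : time_warp f -> star_adjunction f (star_of f).
Proof.
  intros Hf j y; split.
  - intros Hy; apply wsup_ub; exists j; split; [apply wle_refl | exact Hy].
  - intros Hy; apply wle_trans with (f (star_of f (Fin (S j)))).
    + apply (warp_mono f (time_warp_warp f Hf)), Hy.
    + apply (proj2 (Hf _ _ (wsup_lub _))); intros fy [y' [[j' [Hj' Hy']] ->]].
      apply wle_trans with (Fin j'); [exact Hy' | simpl in *; lia].
Qed.

Lemma adjunction_is_star f h : warp f -> warp h -> star_adjunction f h -> is_star f h.
Proof.
  intros Hf Hh Hadj; split; [apply warp_time_warp, Hh | split].
  - intros [[| j] |]; unfold tw_comp; simpl.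
    + rewrite (warp_zero h Hh), (warp_zero f Hf); apply wle_refl.
    + apply Hadj, wle_refl.
    + apply wle_Om.
  - intros h' Hh' Hle; apply time_warp_warp in Hh'.
    assert (Hfin : forall n, wle (h' (Fin n)) (h (Fin n))).
    { intros [| j]; [rewrite (warp_zero h' Hh'); apply wle_Fin0 |].
      apply Hadj, (Hle (Fin (S j))). }
    intros [n |]; [apply Hfin |].
    apply (warp_Om h' Hh'); intro n.
    apply wle_trans with (h (Fin n)); [apply Hfin | apply (warp_mono h Hh), wle_Om].
Qed.

Lemma star_of_is_star f : warp f -> is_star f (star_of f).
Proof.
  intros Hf; apply adjunction_is_star; [exact Hf | apply warp_star_of |].
  apply star_of_adjunction, warp_time_warp, Hf.
Qed.

Lemma is_star_adjunction f h : warp f -> is_star f h -> star_adjunction f h.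
Proof.
  intros Hf [Hh [Hle Hmax]] j y; split.
  - intros Hy; apply wle_trans with (star_of f (Fin (S j))).
    + apply star_of_adjunction; [apply warp_time_warp, Hf | exact Hy].
    + apply Hmax; apply (star_of_is_star f Hf).
  - intros Hy; apply wle_trans with (f (h (Fin (S j)))).
    + apply (warp_mono f Hf), Hy.
    + apply (Hle (Fin (S j))).
Qed.

Lemma upper_adjoint_eq_Fin f u j i :
  (forall y, wle (f y) (Fin j) <-> wle y u) ->
  wle (f (Fin i)) (Fin j) -> ~ wle (f (Fin (S i))) (Fin j) -> u = Fin i.
Proof.
  intros Hu Hi HSi; apply wle_antisym; [| apply Hu, Hi].
  apply wle_Fin_of_not; intro C; apply HSi, Hu, C.
Qed.

Lemma upper_adjoint_eq_Om f u j :
  (forall y, wle (f y) (Fin j) <-> wle y u) -> wle (f Om) (Fin j) -> u = Om.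
Proof. intros Hu HOm; apply wle_antisym; [apply wle_Om | apply Hu, HOm]. Qed.

Lemma nat_boundary (P : nat -> Prop) m : ~ P 0 -> P m -> exists i, ~ P i /\ P (S i).
Proof.
  intros H0 Hm; induction m as [| m IH]; [contradiction |].
  destruct (classic (P m)); eauto.
Qed.

Lemma star_regular f h : warp f -> regular f -> star_adjunction f h -> regular h.
Proof.
  intros Hf Rf Hadj; apply regularE in Rf; apply regularE.
  destruct Rf as [[[a |] [m Hm]] | [k [m Hm]]].
  - left; exists Om; apply eventually_succ; exists a; intros j Hj.
    apply (upper_adjoint_eq_Om f _ j (Hadj j)), (warp_Om f Hf); intro n.
    apply wle_trans with (f (Fin (m + n))); [apply (warp_mono f Hf); simpl; lia |].
    rewrite Hm by lia; simpl; lia.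
  - destruct (nat_boundary (fun i => f (Fin i) = Om) m) as [i [Hi HSi]];
      [rewrite (warp_zero f Hf); discriminate | apply Hm; lia |].
    destruct (f (Fin i)) as [a |] eqn:Ea; [| contradiction].
    left; exists (Fin i); apply eventually_succ; exists a; intros j Hj.
    apply (upper_adjoint_eq_Fin f _ j i (Hadj j)); [rewrite Ea; simpl; lia | rewrite HSi; simpl; tauto].
  - right; exists (-1 - k)%Z; apply eventually_succ.
    exists (m + Z.to_nat k); intros j Hj.
    assert (Hi : exists i, Z.of_nat i = (Z.of_nat j - k)%Z) by (exists (Z.to_nat (Z.of_nat j - k)); lia).
    destruct Hi as [i Zi].
    destruct (Hm i) as [a [Ea Za]], (Hm (S i)) as [b [Eb Zb]]; try lia.
    exists i; split; [| lia].
    apply (upper_adjoint_eq_Fin f _ j i (Hadj j)); [rewrite Ea; simpl; lia | rewrite Eb; simpl; lia].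
Qed.

Theorem proposition2p5 :
  regular_tw tw_id /\
  (forall f g, regular_tw f -> regular_tw g ->
     regular_tw (tw_meet f g) /\ regular_tw (tw_join f g) /\
     regular_tw (tw_comp f g)) /\
  (forall f, regular_tw f ->
     (exists h, is_star f h) /\ (forall h, is_star f h -> regular_tw h)).
Proof.
  unfold regular_tw; split; [| split].
  - split; [apply warp_time_warp, warp_id | apply regular_id].
  - intros f g [Tf Rf] [Tg Rg]; apply time_warpP in Tf, Tg.
    destruct (regular_meet_join f g Rf Rg) as [Rmeet Rjoin].
    repeat split; try apply warp_time_warp;
      auto using warp_meet, warp_join, warp_comp, regular_comp.
  - intros f [Tf Rf]; apply time_warpP in Tf; split.
    + exists (star_of f); apply star_of_is_star, Tf.
    + intros h Hh; split; [apply Hh |].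
      apply (star_regular f h Tf Rf), is_star_adjunction; assumption.
Qed.
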